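(* Let $L_1,L_2$ be disjoint first-order languages without function symbols, and let $\mathcal M_k$ be an $L_k$-structure for $k=1,2$. Then the standard simple product of $\mathcal M_1$ and $\mathcal M_2$ is a simple product of $\mathcal M_1$ and $\mathcal M_2$.
   Context: Let $M_k$ be the universe of $\mathcal M_k$ and $\pi_k:M_1\times M_2\to M_k$ the projections. For $A\subseteq M_1^n$ and $B\subseteq M_2^n$ put $A*B=\{((a_1,b_1),\ldots,(a_n,b_n))\in(M_1\times M_2)^n:(a_1,\ldots,a_n)\in A,(b_1,\ldots,b_n)\in B\}$. A structure $\mathcal N$ (in any language) is a simple product of $\mathcal M_1$ and $\mathcal M_2$ if its universe is $M_1\times M_2$ and every $\mathcal N$-definable (with parameters) subset of $(M_1\times M_2)^n$ is a Boolean combination of finitely many sets of the form $A*M_2^n$ with $A$ an $\mathcal M_1$-definable subset of $M_1^n$ and $M_1^n*B$ with $B$ an $\mathcal M_2$-definable subset of $M_2^n$. The language $L_{\mathrm{sim}}$ has constant symbols $C_{(c_1,c_2)}$ for each pair of constants $c_1\in L_1$, $c_2\in L_2$, the predicate symbols of $L_1$ and of $L_2$, and two binary predicates $\sim_1,\sim_2$. The standard simple product of $\mathcal M_1,\mathcal M_2$ is the $L_{\mathrm{sim}}$-structure with universe $M_1\times M_2$, where $C_{(c_1,c_2)}$ is interpreted as $(c_1^{\mathcal M_1},c_2^{\mathcal M_2})$, $x\sim_k y$ iff $\pi_k(x)=\pi_k(y)$, and for an $n$-ary predicate $R\in L_k$, $R(\bar c)$ holds iff $\mathcal M_k\models R(\pi_k(\bar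 c))$ ($\pi_k$ applied coordinatewise). *)

From mathcomp Require Import all_boot.
Set Implicit Arguments. Unset Strict Implicit. Unset Printing Implicit Defensive.

Record language := Language {
  const_sym : Type;
  pred_sym : Type;
  arity : pred_sym -> nat }.

Record structure (L : language) (M : Type) := Structure {
  cst : const_sym L -> M;
  rel : forall R : pred_sym L, ('I_(arity R) -> M) -> Prop }.

Inductive term (L : language) :=
| TVar : nat -> term L
| TConst : const_sym L -> term L.

Inductive formula (L : language) :=
| FFalse : formula L
| FEq : term L -> term L -> formula L
| FRel : forall R : pred_sym L, ('I_(arity R) -> term L) -> formula L
| FNot : formula L -> formula L
| FAnd : formula L -> formula L -> formula L
| FOr : formula L -> formula L -> formula L
| FImp : formula L -> formula L -> formula L
| FEx : nat -> formula L -> formula L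
| FAll : nat -> formula L -> formula L.

Definition update (M : Type) (env : nat -> M) (i : nat) (x : M) : nat -> M :=
  fun j => if j == i then x else env j.

Definition eval_term (L : language) (M : Type) (S : structure L M)
  (env : nat -> M) (t : term L) : M :=
  match t with TVar i => env i | TConst c => cst S c end.

Fixpoint sat (L : language) (M : Type) (S : structure L M)
  (env : nat -> M) (phi : formula L) : Prop :=
  match phi with
  | FFalse => False
  | FEq t1 t2 => eval_term S env t1 = eval_term S env t2
  | FRel R ts => rel S (fun j => eval_term S env (ts j))
  | FNot p => ~ sat S env p
  | FAnd p q => sat S env p /\ sat S env q
  | FOr p q => sat S env p \/ sat S env q
  | FImp p q => sat S env p -> sat S env q
  | FEx i p => exists x : M, sat S (update env i x) p
  | FAll i p => forall x : M, sat S (update env i x) p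
  end.

(* environment: variables 0..n-1 get the tuple a, the others the parameters e *)
Definition extend (M : Type) (n : nat) (a : 'I_n -> M) (e : nat -> M) : nat -> M :=
  fun i => match @insub nat (fun k => k < n) 'I_n i with
           | Some j => a j
           | None => e i
           end.

(* A is S-definable with parameters: given by a formula phi with free
   variables among x_0..x_{n-1} and (parameter) variables x_k, k >= n,
   interpreted by elements e k of M. *)
Definition definable (L : language) (M : Type) (S : structure L M) (n : nat)
  (A : ('I_n -> M) -> Prop) : Prop :=
  exists (phi : formula L) (e : nat -> M),
    forall a, A a <-> sat S (extend a e) phi.

Inductive bool_comb (L1 L2 : language) (M1 M2 : Type)
  (S1 : structure L1 M1) (S2 : structure L2 M2) (n : nat)
  : (('I_n -> M1 * M2) -> Prop) -> Prop :=
| bc_left : forall A, definable S1 A ->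
    bool_comb S1 S2 (fun c => A (fun i => (c i).1))
| bc_right : forall B, definable S2 B ->
    bool_comb S1 S2 (fun c => B (fun i => (c i).2))
| bc_full : bool_comb S1 S2 (fun _ => True)
| bc_compl : forall X, bool_comb S1 S2 X -> bool_comb S1 S2 (fun c => ~ X c)
| bc_inter : forall X Y, bool_comb S1 S2 X -> bool_comb S1 S2 Y ->
    bool_comb S1 S2 (fun c => X c /\ Y c)
| bc_union : forall X Y, bool_comb S1 S2 X -> bool_comb S1 S2 Y ->
    bool_comb S1 S2 (fun c => X c \/ Y c).

Definition is_simple_product (L1 L2 : language) (M1 M2 : Type)
  (S1 : structure L1 M1) (S2 : structure L2 M2)
  (L : language) (N : structure L (M1 * M2)) : Prop :=
  forall (n : nat) (X : ('I_n -> M1 * M2) -> Prop),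
    definable N X ->
    exists Y, bool_comb S1 S2 Y /\ (forall c, X c <-> Y c).

(* The language L_sim: constants = pairs of constants; predicates = the
   (disjoint union of the) predicates of L1 and L2 plus ~1 (true), ~2 (false). *)
Definition sim_arity (L1 L2 : language)
  (R : (pred_sym L1 + pred_sym L2) + bool) : nat :=
  match R with
  | inl (inl R1) => arity R1
  | inl (inr R2) => arity R2
  | inr _ => 2
  end.

Definition L_sim (L1 L2 : language) : language :=
  @Language (const_sym L1 * const_sym L2)
            ((pred_sym L1 + pred_sym L2) + bool) (@sim_arity L1 L2).

Definition sim_rel (L1 L2 : language) (M1 M2 : Type)
  (S1 : structure L1 M1) (S2 : structure L2 M2)
  (R : (pred_sym L1 + pred_sym L2) + bool)
  : ('I_(sim_arity R) -> M1 * M2) -> Prop :=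
  match R as R0 return ('I_(sim_arity R0) -> M1 * M2) -> Prop with
  | inl (inl R1) => fun c => @rel _ _ S1 R1 (fun i => (c i).1)
  | inl (inr R2) => fun c => @rel _ _ S2 R2 (fun i => (c i).2)
  | inr true => fun c => (c ord0).1 = (c (@Ordinal 2 1 isT)).1
  | inr false => fun c => (c ord0).2 = (c (@Ordinal 2 1 isT)).2
  end.

Definition std_simple_product (L1 L2 : language) (M1 M2 : Type)
  (S1 : structure L1 M1) (S2 : structure L2 M2)
  : structure (L_sim L1 L2) (M1 * M2) :=
  @Structure (L_sim L1 L2) (M1 * M2)
    (fun c : const_sym L1 * const_sym L2 => (cst S1 c.1, cst S2 c.2))
    (@sim_rel L1 L2 M1 M2 S1 S2).

(* In the standard simple product every L_sim-formula is equivalent to a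
   finite disjunction of "rectangles" phi1(pi_1 x) /\ phi2(pi_2 x) with phi_k
   an L_k-formula.  Atomic formulas are rectangles, since there are no function
   symbols and each predicate of L_sim only looks at one coordinate.  The normal
   form is closed under disjunction, under conjunction by distributivity, under
   negation by De Morgan, and under existential quantification because a
   witness in M1 x M2 is a pair of independent witnesses in M1 and M2.  A
   disjunction of rectangles is a Boolean combination of sets A * M2^n and
   M1^n * B, which gives the theorem. *)
From mathcomp Require Import all_boot.
From Stdlib Require Import Classical FunctionalExtensionality PropExtensionality.
Set Implicit Arguments. Unset Strict Implicit. Unset Printing Implicit Defensive.

Lemma comp_update (A B : Type) (f : A -> B) (env : nat -> A) (i : nat) (x : A) :
  f \o update env i x = update (f \o env) i (f x).
Proof.
by apply: functional_extensionality => k; rewrite /update /=; case: (k == i).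
Qed.

Lemma comp_extend (A B : Type) (f : A -> B) (n : nat) (a : 'I_n -> A)
    (e : nat -> A) :
  f \o extend a e = extend (f \o a) (f \o e).
Proof.
by apply: functional_extensionality => k; rewrite /extend /=; case: insub.
Qed.

Definition FTrue (L : language) : formula L := FNot (@FFalse L).

(* [:: (phi1, psi1); ...; (phik, psik)] encodes the disjunction of the
   rectangles phii(pi_1 x) /\ psii(pi_2 x); see [sat_rects]. *)
Definition rects (L1 L2 : language) := seq (formula L1 * formula L2).

Section Translation.
Variables L1 L2 : language.

Definition term_fst (t : term (L_sim L1 L2)) : term L1 :=
  match t with TVar i => @TVar L1 i | TConst c => @TConst L1 c.1 end.

Definition term_snd (t : term (L_sim L1 L2)) : term L2 :=
  match t with TVar i => @TVar L2 i | TConst c => @TConst L2 c.2 end.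

Definition rects_and (l1 l2 : rects L1 L2) : rects L1 L2 :=
  [seq (FAnd p.1 q.1, FAnd p.2 q.2) | p <- l1, q <- l2].

Fixpoint rects_not (l : rects L1 L2) : rects L1 L2 :=
  if l is p :: l' then
    rects_and [:: (FNot p.1, FTrue L2); (FTrue L1, FNot p.2)] (rects_not l')
  else [:: (FTrue L1, FTrue L2)].

Definition rects_ex (i : nat) (l : rects L1 L2) : rects L1 L2 :=
  [seq (FEx i p.1, FEx i p.2) | p <- l].

Definition rects_of_rel (R : pred_sym (L_sim L1 L2)) :
  ('I_(arity R) -> term (L_sim L1 L2)) -> rects L1 L2 :=
  match R as R0
    return ('I_(@arity (L_sim L1 L2) R0) -> term (L_sim L1 L2)) -> rects L1 L2
  with
  | inl (inl R1) => fun ts => [:: (@FRel L1 R1 (term_fst \o ts), FTrue L2)]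
  | inl (inr R2) => fun ts => [:: (FTrue L1, @FRel L2 R2 (term_snd \o ts))]
  | inr true => fun ts =>
      [:: (FEq (term_fst (ts ord0)) (term_fst (ts (@Ordinal 2 1 isT))), FTrue L2)]
  | inr false => fun ts =>
      [:: (FTrue L1, FEq (term_snd (ts ord0)) (term_snd (ts (@Ordinal 2 1 isT))))]
  end.

Fixpoint rects_of (phi : formula (L_sim L1 L2)) : rects L1 L2 :=
  match phi with
  | FFalse => [::]
  | FEq t1 t2 =>
      [:: (FEq (term_fst t1) (term_fst t2), FEq (term_snd t1) (term_snd t2))]
  | FRel R ts => rects_of_rel ts
  | FNot p => rects_not (rects_of p)
  | FAnd p q => rects_and (rects_of p) (rects_of q)
  | FOr p q => rects_of p ++ rects_of q
  | FImp p q => rects_not (rects_of p) ++ rects_of q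
  | FEx i p => rects_ex i (rects_of p)
  | FAll i p => rects_not (rects_ex i (rects_not (rects_of p)))
  end.

End Translation.

Section Semantics.
Variables (L1 L2 : language) (M1 M2 : Type).
Variables (S1 : structure L1 M1) (S2 : structure L2 M2).

Local Notation N := (std_simple_product S1 S2).

Definition sat_rect (env : nat -> M1 * M2) (p : formula L1 * formula L2) : Prop :=
  sat S1 (fst \o env) p.1 /\ sat S2 (snd \o env) p.2.

Fixpoint sat_rects (env : nat -> M1 * M2) (l : rects L1 L2) : Prop :=
  if l is p :: l' then sat_rect env p \/ sat_rects env l' else False.

Lemma eval_term_fst env t :
  eval_term S1 (fst \o env) (term_fst t) = (eval_term N env t).1.
Proof. by case: t. Qed.

Lemma eval_term_snd env t :
  eval_term S2 (snd \o env) (term_snd t) = (eval_term N env t).2.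
Proof. by case: t. Qed.

Lemma sat_rects_cat env l1 l2 :
  sat_rects env (l1 ++ l2) <-> sat_rects env l1 \/ sat_rects env l2.
Proof. by elim: l1 => [|p l IH] /=; [tauto | rewrite IH; tauto]. Qed.

Lemma sat_rects_and env l1 l2 :
  sat_rects env (rects_and l1 l2) <-> sat_rects env l1 /\ sat_rects env l2.
Proof.
have sat_and_with p l : sat_rects env [seq (FAnd p.1 q.1, FAnd p.2 q.2) | q <- l]
                        <-> sat_rect env p /\ sat_rects env l.
  by elim: l => [|q l IH] /=; [tauto | rewrite IH /sat_rect /=; tauto].
elim: l1 => [|p l IH] /=; first tauto.
by rewrite sat_rects_cat sat_and_with IH; tauto.
Qed.

Lemma sat_rects_not env l : sat_rects env (rects_not l) <-> ~ sat_rects env l.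
Proof.
elim: l => [|p l IH] /=; first by rewrite /sat_rect /=; tauto.
rewrite sat_rects_and IH /= /sat_rect /=.
have := classic (sat S1 (fst \o env) p.1).
have := classic (sat S2 (snd \o env) p.2).
tauto.
Qed.

Lemma sat_rects_ex env i l :
  sat_rects env (rects_ex i l) <-> exists x, sat_rects (update env i x) l.
Proof.
elim: l => [|p l IH] /=; first by split=> // [[]].
rewrite IH /sat_rect /=; split.
- move=> [[[a Ha] [b Hb]] | [x Hx]]; last by exists x; right.
  by exists (a, b); left; rewrite !comp_update.
- move=> [x [[Ha Hb] | Hx]]; last by right; exists x.
  by left; rewrite !comp_update in Ha Hb; split; [exists x.1 | exists x.2].
Qed.

Lemma sat_rects_of_rel env (R : pred_sym (L_sim L1 L2)) ts :
  sat N env (@FRel (L_sim L1 L2) R ts) <-> sat_rects env (rects_of_rel ts).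
Proof.
case: R ts => [[R1 | R2] | []] ts; rewrite /= /sat_rect /=.
- have -> : (fun j => eval_term S1 (fst \o env) (term_fst (ts j)))
            = (fun j => (eval_term N env (ts j)).1).
    by apply: functional_extensionality => j; apply: eval_term_fst.
  tauto.
- have -> : (fun j => eval_term S2 (snd \o env) (term_snd (ts j)))
            = (fun j => (eval_term N env (ts j)).2).
    by apply: functional_extensionality => j; apply: eval_term_snd.
  tauto.
- rewrite !eval_term_fst; tauto.
- rewrite !eval_term_snd; tauto.
Qed.

Lemma sat_rects_of phi env : sat N env phi <-> sat_rects env (rects_of phi).
Proof.
elim: phi env
  => [|t1 t2|R ts|p IH|p IHp q IHq|p IHp q IHq|p IHp q IHq|i p IH|i p IH] env /=.
- tauto.
- rewrite /sat_rect /= !eval_term_fst !eval_term_snd.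
  case: (eval_term N env t1) (eval_term N env t2) => [a b] [c d] /=.
  by rewrite pair_equal_spec; tauto.
- exact: sat_rects_of_rel.
- by rewrite sat_rects_not IH.
- by rewrite sat_rects_and IHp IHq.
- by rewrite sat_rects_cat IHp IHq.
- rewrite sat_rects_cat sat_rects_not IHp IHq.
  by have := classic (sat_rects env (rects_of p)); tauto.
- rewrite sat_rects_ex; split=> [[x /IH] | [x /IH]]; by exists x.
- rewrite sat_rects_not sat_rects_ex; split.
  + by move=> all_p [x /sat_rects_not]; apply; apply/IH/all_p.
  + move=> no_counterexample x; apply/IH; apply: NNPP => not_p.
    by apply: no_counterexample; exists x; apply/sat_rects_not.
Qed.

Lemma bool_comb_ext n (X Y : ('I_n -> M1 * M2) -> Prop) :
  bool_comb S1 S2 X -> (forall c, X c <-> Y c) -> bool_comb S1 S2 Y.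
Proof.
move=> bcX XY; suff -> : Y = X by [].
apply: functional_extensionality => c.
by apply: propositional_extensionality; rewrite XY.
Qed.

Lemma bool_comb_rect n (e : nat -> M1 * M2) p :
  bool_comb S1 S2 (fun c : 'I_n -> M1 * M2 => sat_rect (extend c e) p).
Proof.
apply: (bool_comb_ext (bc_inter
  (@bc_left _ _ _ _ S1 S2 n (fun a => sat S1 (extend a (fst \o e)) p.1) _)
  (@bc_right _ _ _ _ S1 S2 n (fun b => sat S2 (extend b (snd \o e)) p.2) _))).
- by exists p.1, (fst \o e).
- by exists p.2, (snd \o e).
- by move=> c; rewrite /sat_rect !comp_extend.
Qed.

Lemma bool_comb_sat_rects n (e : nat -> M1 * M2) l :
  bool_comb S1 S2 (fun c : 'I_n -> M1 * M2 => sat_rects (extend c e) l).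
Proof.
elim: l => [|p l IH] /=.
  by apply: (bool_comb_ext (bc_compl (bc_full S1 S2 n))).
by apply: bc_union; [apply: bool_comb_rect | apply: IH].
Qed.

End Semantics.

Theorem corollary2p10 (L1 L2 : language) (M1 M2 : Type)
  (S1 : structure L1 M1) (S2 : structure L2 M2) :
  is_simple_product S1 S2 (std_simple_product S1 S2).
Proof.
move=> n X [phi [e defX]].
exists (fun c => sat_rects S1 S2 (extend c e) (rects_of phi)); split.
  exact: bool_comb_sat_rects.
by move=> c; rewrite defX sat_rects_of.
Qed.
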